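(* Let $W$ be a (1-safe) DAW-net and $\rho=(M_0,\eta_0)\xrightarrow{t_0}(M_1,\eta_1)\xrightarrow{t_1}\cdots\xrightarrow{t_{\ell-1}}(M_\ell,\eta_\ell)$ a sequence of valid firings of $W$ ($\ell\ge0$). For every $0\le i\le\ell$ and every guard $\Phi$ over the data model of $W$, and every DNF characterisation $\bigvee_{k}t^k_1\wedge\dots\wedge t^k_{n_k}$ of $\Phi$ with translation $[\![\Phi]\!]=\bigvee_k[\![t^k_1]\!]\wedge\dots\wedge[\![t^k_{n_k}]\!]$: $$\mathcal{D},\eta_i\models\Phi\quad\text{iff}\quad\Phi_i(\rho)\models i{:}[\![\Phi]\!],$$ where $i{:}[\![\Phi]\!]$ is obtained by prefixing each atom $[\![t]\!]$ by $i{:}$, and a set $X$ satisfies a prefixed atom $i{:}[\![t]\!]$ iff $i{:}[\![t]\!]\in X$ (Boolean connectives read classically).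
   Context: Data model $\mathcal{D}=(\mathcal{V},\Delta,\mathrm{dm},\mathrm{ord})$: variables $\mathcal{V}$, finite domains $\Delta_i$ assigned by total surjective $\mathrm{dm}$, and partial orders $\le_{\Delta_i}$ on some domains. Assignments are partial functions $\eta$ with $\eta(v)\in\mathrm{dm}(v)$. Guards: $\Phi::=\mathit{true}\mid\mathrm{def}(v)\mid t_1=t_2\mid t_1\le t_2\mid\neg\Phi\mid\Phi\wedge\Phi$ ($t_i$ variables or constants); with $t[\eta]=\eta(t)$ for variables on which $\eta$ is defined and $t$ otherwise: $\mathrm{def}(v)$ holds iff $\eta(v)$ is defined; $t_1=t_2$ iff $t_1[\eta],t_2[\eta]$ are both constants and equal; $t_1\le t_2$ iff both lie in some $\Delta_i$ with an order and $t_1[\eta]\le_{\Delta_i}t_2[\eta]$; $\neg,\wedge$ classical. DAW-net $W=\langle\mathcal{D},(P,T,F),\mathrm{wr},\mathrm{gd}\rangle$: $(P,T,F)$ a workflow Petri net with places $\mathit{start},\mathit{sink}$, presets ${}^\bullet t$ and postsets $t^\bullet$; $\mathrm{wr}(t)$ a partial function from variables with $\mathrm{wr}(t)(v)\subseteq\mathrm{dm}(v)$; $\mathrm{gd}(t)$ a guard. A firing $(M,\eta)\xrightarrow{t}(M',\eta')$ is valid iff $\{p\mid M(p)>0\}\supseteq{}^\bullet t$, $\mathcal{D},\eta\models\mathrm{gd}(t)$, $M'(p)=M(p)-1$ on ${}^\bullet t\setminus t^\bullet$, $M(p)+1$ on $t^\bullet\setminus{}^\bullet t$, $M(p)$ otherwise,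 $\mathrm{dom}(\eta')=\mathrm{dom}(\eta)\cup\{v\mid\mathrm{wr}(t)(v)\neq\emptyset\}\setminus\{v\mid\mathrm{wr}(t)(v)=\emptyset\}$ and $\eta'(v)\in\mathrm{wr}(t)(v)$ for $v\in\mathrm{dom}(\mathrm{wr}(t))$, $\eta'(v)=\eta(v)$ otherwise. $W$ is assumed 1-safe. $\mathcal{V}'$ is the finite set of variables appearing in $W$; $\mathrm{adm}(v)=\bigcup_{t\in T}\mathrm{wr}(t)(v)$. A DNF characterisation of $\Phi$ is a formula $\bigvee_{k}t^k_1\wedge\dots\wedge t^k_{n_k}$ equivalent to $\Phi$ over $\mathcal{D}$ in which each term is $v=o$ (with $o$ a constant) or $\neg\mathrm{def}(v)$; the translation is $[\![v=o]\!]=(v=o)$ and $[\![\neg\mathrm{def}(v)]\!]=(v=\mathrm{null})$, where $\mathrm{null}$ is a fresh constant. For $\rho$ as in the claim and $0\le i\le\ell$, $\Phi_i(\rho)=\Phi^\nu_i(\rho)\cup\Phi^\tau_i(\rho)$, with $\Phi^\nu_i(\rho)=\{i{:}p=\mathrm{true},\neg(i{:}p=\mathrm{false})\mid p\in P,M_i(p)>0\}\cup\{i{:}p=\mathrm{false},\neg(i{:}p=\mathrm{true})\mid p\in P,M_i(p)=0\}\cup\{i{:}v=o,\neg(i{:}v=\mathrm{null})\mid v\in\mathcal{V}',\eta_i(v)=o\}\cup\{i{:}v=\mathrm{null}\mid v\in\mathcal{V}',\eta_i(v)\text{ undefined}\}\cup\{\neg(i{:}v=o)\mid v\in\mathcal{V}',o\in\mathrm{adm}(v),\eta_i(v)\neq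 o\text{ or undefined}\}\cup\{i{:}\mathit{trans}=\mathrm{true},\neg(i{:}\mathit{trans}=\mathrm{false})\}$, and $\Phi^\tau_i(\rho)=\emptyset$ if $i\ge\ell$, $\Phi^\tau_i(\rho)=\{i{:}t_i\}\cup\{\neg(i{:}t)\mid t\in T,t\neq t_i\}$ if $i<\ell$. (Here $i{:}A$ are ground atoms indexed by time step $i$, and $\neg$ is classical negation.) *)

From Stdlib Require List.
From mathcomp Require Import all_boot.


Set Implicit Arguments.
Unset Strict Implicit.
Unset Printing Implicit Defensive.

(*   Const : the universe of constants (domain elements)               *)
(*   Dom   : finite index set of the domains Delta_i                   *)
Record DataModel (Var Const : eqType) (Dom : finType) := {
  domain : Dom -> seq Const;
  dm : Var -> Dom;
  dm_surj : forall d : Dom, exists v : Var, dm v = d;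
  ord : Dom -> option (rel Const);
  ord_refl : forall d r, ord d = Some r ->
      forall x, x \in domain d -> r x x;
  ord_antisym : forall d r, ord d = Some r ->
      forall x y, x \in domain d -> y \in domain d -> r x y -> r y x -> x = y;
  ord_trans : forall d r, ord d = Some r ->
      forall x y z, x \in domain d -> y \in domain d -> z \in domain d ->
      r x y -> r y z -> r x z
}.

Definition assignment (Var Const : Type) := Var -> option Const.

Definition is_assignment (Var Const : eqType) (Dom : finType)
  (D : DataModel Var Const Dom) (eta : assignment Var Const) : Prop :=
  forall v o, eta v = Some o -> o \in domain D (dm D v).

Inductive gterm (Var Const : Type) :=
| TVar of Var
| TConst of Const.

Inductive guard (Var Const : Type) :=
| GTrue
| GDef of Var
| GEq of gterm Var Const & gterm Var Const
| GLe of gterm Var Const & gterm Var Const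
| GNot of guard Var Const
| GAnd of guard Var Const & guard Var Const.

Arguments TVar {Var Const}.
Arguments TConst {Var Const}.
Arguments GTrue {Var Const}.
Arguments GDef {Var Const}.

Definition term_val (Var Const : Type) (eta : assignment Var Const)
  (t : gterm Var Const) : gterm Var Const :=
  match t with
  | TVar v => match eta v with Some c => TConst c | None => TVar v end
  | TConst c => TConst c
  end.

Fixpoint holds (Var Const : eqType) (Dom : finType)
  (D : DataModel Var Const Dom) (eta : assignment Var Const)
  (g : guard Var Const) : Prop :=
  match g with
  | GTrue => True
  | GDef v => eta v <> None
  | GEq t1 t2 => exists c,
      term_val eta t1 = TConst c /\ term_val eta t2 = TConst c
  | GLe t1 t2 => exists c1 c2 (d : Dom) (r : rel Const),
      [/\ term_val eta t1 = TConst c1, term_val eta t2 = TConst c2,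
          ord D d = Some r & [/\ c1 \in domain D d, c2 \in domain D d & r c1 c2]]
  | GNot g' => ~ holds D eta g'
  | GAnd g1 g2 => holds D eta g1 /\ holds D eta g2
  end.

Definition occurs_term (Var Const : Type) (v : Var) (t : gterm Var Const) :=
  t = TVar v.

Fixpoint occurs_guard (Var Const : Type) (v : Var) (g : guard Var Const)
  : Prop :=
  match g with
  | GTrue => False
  | GDef w => w = v
  | GEq t1 t2 | GLe t1 t2 => occurs_term v t1 \/ occurs_term v t2
  | GNot g' => occurs_guard v g'
  | GAnd g1 g2 => occurs_guard v g1 \/ occurs_guard v g2
  end.

Inductive dterm (Var Const : Type) :=
| DEq of Var & Const
| DUndef of Var.

Definition dnf (Var Const : Type) := list (list (dterm Var Const)).

Definition dterm_guard (Var Const : Type) (a : dterm Var Const)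
  : guard Var Const :=
  match a with
  | DEq v o => GEq (TVar v) (TConst o)
  | DUndef v => GNot (GDef v)
  end.

Definition dnf_holds (Var Const : eqType) (Dom : finType)
  (D : DataModel Var Const Dom) (eta : assignment Var Const)
  (f : dnf Var Const) : Prop :=
  exists k, List.In k f /\ forall a, List.In a k -> holds D eta (dterm_guard a).

Definition dnf_char (Var Const : eqType) (Dom : finType)
  (D : DataModel Var Const Dom) (Phi : guard Var Const) (f : dnf Var Const)
  : Prop :=
  forall eta, is_assignment D eta -> (holds D eta Phi <-> dnf_holds D eta f).

Definition occurs_dterm (Var Const : Type) (v : Var) (a : dterm Var Const) :=
  match a with DEq w _ => w = v | DUndef w => w = v end.

Definition occurs_dnf (Var Const : Type) (v : Var) (f : dnf Var Const) :=
  exists k a, List.In k f /\ List.In a k /\ occurs_dterm v a.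

Record DAWnet (Var Const : eqType) (Dom : finType)
  (D : DataModel Var Const Dom) (Place Trans : finType) := {
  (* flow relation F, split into P x T and T x P parts *)
  flowPT : Place -> Trans -> bool;
  flowTP : Trans -> Place -> bool;
  start : Place;
  sink : Place;
  start_no_in : forall t, ~~ flowTP t start;
  sink_no_out : forall t, ~~ flowPT sink t;
  wf_connected : forall n : (Place + Trans)%type,
      connect (fun x y : (Place + Trans)%type =>
                 match x, y with
                 | inl p, inr t => flowPT p t
                 | inr t, inl p => flowTP t p
                 | _, _ => false end) (inl start) n
      && connect (fun x y : (Place + Trans)%type =>
                 match x, y with
                 | inl p, inr t => flowPT p t
                 | inr t, inl p => flowTP t p
                 | _, _ => false end) n (inl sink);
  wr : Trans -> Var -> option (seq Const);
  wr_sub : forall t v s, wr t v = Some s -> {subset s <= domain D (dm D v)};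
  gd : Trans -> guard Var Const
}.

Section Firing.
Variables (Var Const : eqType) (Dom : finType) (D : DataModel Var Const Dom)
  (Place Trans : finType) (W : DAWnet D Place Trans).

Definition marking := Place -> nat.

Definition valid_firing (M : marking) (eta : assignment Var Const) (t : Trans)
  (M' : marking) (eta' : assignment Var Const) : Prop :=
  [/\ forall p, flowPT W p t -> 0 < M p,
      holds D eta (gd W t),
      forall p, M' p =
        if flowPT W p t && ~~ flowTP W t p then M p - 1
        else if flowTP W t p && ~~ flowPT W p t then M p + 1
        else M p
    & forall v, match wr W t v with
        | None => eta' v = eta v
        | Some [::] => eta' v = None
        | Some s => exists2 o, eta' v = Some o & o \in s
        end].

Inductive reachable : marking -> assignment Var Const -> Prop :=
| reach_init : reachable (fun p => if p == start W then 1 else 0) (fun _ => None)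
| reach_step M eta t M' eta' :
    reachable M eta -> valid_firing M eta t M' eta' -> reachable M' eta'.

Definition one_safe : Prop :=
  forall M eta, reachable M eta -> forall p, M p <= 1.

Definition inVprime (v : Var) : Prop :=
  (exists t, wr W t v <> None) \/ (exists t, occurs_guard v (gd W t)).

Definition adm (v : Var) (o : Const) : Prop :=
  exists t s, wr W t v = Some s /\ o \in s.

(* ground atoms  i:A  ;  AVar i v None  is  i:v=null  (null fresh) *)
Inductive atom :=
| APlace of nat & Place & bool
| AVar of nat & Var & option Const
| ATransFlag of nat & bool
| AFire of nat & Trans.

Inductive literal := Pos of atom | Neg of atom.

(* Phi_i(rho) for rho given by l, M, eta, tr *)
Inductive PhiSet (l : nat) (M : nat -> marking)
  (eta : nat -> assignment Var Const) (tr : nat -> Trans) (i : nat)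
  : literal -> Prop :=
| phi_pl_t1 p : 0 < M i p -> PhiSet l M eta tr i (Pos (APlace i p true))
| phi_pl_t2 p : 0 < M i p -> PhiSet l M eta tr i (Neg (APlace i p false))
| phi_pl_f1 p : M i p = 0 -> PhiSet l M eta tr i (Pos (APlace i p false))
| phi_pl_f2 p : M i p = 0 -> PhiSet l M eta tr i (Neg (APlace i p true))
| phi_var1 v o : inVprime v -> eta i v = Some o ->
    PhiSet l M eta tr i (Pos (AVar i v (Some o)))
| phi_var2 v o : inVprime v -> eta i v = Some o ->
    PhiSet l M eta tr i (Neg (AVar i v None))
| phi_null v : inVprime v -> eta i v = None ->
    PhiSet l M eta tr i (Pos (AVar i v None))
| phi_nvar v o : inVprime v -> adm v o -> eta i v <> Some o ->
    PhiSet l M eta tr i (Neg (AVar i v (Some o)))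
| phi_trans1 : PhiSet l M eta tr i (Pos (ATransFlag i true))
| phi_trans2 : PhiSet l M eta tr i (Neg (ATransFlag i false))
| phi_fire : i < l -> PhiSet l M eta tr i (Pos (AFire i (tr i)))
| phi_nfire t : i < l -> t <> tr i -> PhiSet l M eta tr i (Neg (AFire i t)).

Definition tr_dterm (i : nat) (a : dterm Var Const) : atom :=
  match a with
  | DEq v o => AVar i v (Some o)
  | DUndef v => AVar i v None
  end.

Definition sat_dnf (X : literal -> Prop) (i : nat) (f : dnf Var Const) : Prop :=
  exists k, List.In k f /\ forall a, List.In a k -> X (Pos (tr_dterm i a)).

End Firing.

From mathcomp Require Import all_boot.

(* For a variable v of V', the positive variable atoms of Phi_i(rho) record
   eta_i exactly: i:v=o is in Phi_i(rho) iff eta_i(v) = o, and i:v=null iff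
   eta_i(v) is undefined.  Each DNF literal v=o or ~def(v) therefore holds at
   eta_i iff its translation lies in Phi_i(rho), so the DNF holds at eta_i iff
   Phi_i(rho) satisfies its translation, and the characterisation transfers
   this to Phi. *)

Set Implicit Arguments.
Unset Strict Implicit.
Unset Printing Implicit Defensive.

Definition dterm_var (Var Const : Type) (a : dterm Var Const) : Var :=
  match a with DEq v _ | DUndef v => v end.

Definition dterm_val (Var Const : Type) (a : dterm Var Const) : option Const :=
  match a with DEq _ o => Some o | DUndef _ => None end.

Lemma tr_dtermE (Var Const : eqType) (Place Trans : finType) (i : nat)
  (a : dterm Var Const) :
  tr_dterm Place Trans i a = AVar Place Trans i (dterm_var a) (dterm_val a).
Proof. by case: a. Qed.

Lemma holds_dterm (Var Const : eqType) (Dom : finType)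
  (D : DataModel Var Const Dom) (eta : assignment Var Const)
  (a : dterm Var Const) :
  holds D eta (dterm_guard a) <-> eta (dterm_var a) = dterm_val a.
Proof.
case: a => [v o|v] /=; case: (eta v) => [c|]; split=> //.
- by case=> c0 [[->] [->]].
- by case=> ->; exists o.
- by case=> c0 [].
- by move=> H; exfalso; apply: H.
- by move=> _; apply.
Qed.

Lemma PhiSet_AVar (Var Const : eqType) (Dom : finType)
  (D : DataModel Var Const Dom) (Place Trans : finType)
  (W : DAWnet D Place Trans) (l : nat) (M : nat -> marking Place)
  (eta : nat -> assignment Var Const) (tr : nat -> Trans) (i : nat)
  (v : Var) (x : option Const) :
  PhiSet W l M eta tr i (Pos (AVar Place Trans i v x))
    <-> inVprime W v /\ eta i v = x.
Proof.
split=> [H | [Vv <-]].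
- by inversion H; subst.
- by case E: (eta i v) => [o|]; [apply: phi_var1 | apply: phi_null].
Qed.

Lemma dnf_holds_sat (Var Const : eqType) (Dom : finType)
  (D : DataModel Var Const Dom) (Place Trans : finType)
  (eta : assignment Var Const) (X : literal Var Const Place Trans -> Prop)
  (i : nat) (f : dnf Var Const) :
  (forall k a, List.In k f -> List.In a k ->
     holds D eta (dterm_guard a) <-> X (Pos (tr_dterm Place Trans i a))) ->
  dnf_holds D eta f <-> sat_dnf X i f.
Proof.
move=> litE; split=> -[k [fk kP]]; exists k; split=> // a ka.
all: by apply/(litE k a fk ka)/kP.
Qed.

Theorem mainTheorem3
  (Var Const : eqType) (Dom Place Trans : finType)
  (D : DataModel Var Const Dom) (W : DAWnet D Place Trans)
  (Hsafe : one_safe W)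
  (l : nat) (M : nat -> marking Place) (eta : nat -> assignment Var Const)
  (tr : nat -> Trans)
  (Hassign : forall j, j <= l -> is_assignment D (eta j))
  (Hrun : forall j, j < l ->
     valid_firing W (M j) (eta j) (tr j) (M j.+1) (eta j.+1))
  (i : nat) (Hi : i <= l)
  (Phi : guard Var Const)
  (HPhiV : forall v, occurs_guard v Phi -> inVprime W v)
  (f : dnf Var Const) (Hf : dnf_char D Phi f)
  (HfV : forall v, occurs_dnf v f -> inVprime W v) :
  holds D (eta i) Phi <-> sat_dnf (PhiSet W l M eta tr i) i f.
Proof.
rewrite (Hf _ (Hassign i Hi)); apply: dnf_holds_sat => k a fk ka.
have Vv : inVprime W (dterm_var a).
  by apply: HfV; exists k, a; do 2!split=> //; case: a {ka}.
rewrite holds_dterm tr_dtermE PhiSet_AVar.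
by split=> [|[]].
Qed.
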